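(* Let $L^x,L^y>0$, let $i\neq j$ be two boxes, each box $k\in\{i,j\}$ having center $(c^x_k,c^y_k)$, side lengths $(\ell^x_k,\ell^y_k)$, area $\alpha_k>0$ and constants $lb^s_k,ub^s_k$. Let $$Q^{FLP}=\{(c_i,c_j,\ell_i,\ell_j)\in\mathbb{R}^8:\ \tfrac12\ell^s_k\le c^s_k\le L^s-\tfrac12\ell^s_k,\ lb^s_k\le\ell^s_k\le ub^s_k,\ \ell^x_k\ell^y_k\ge\alpha_k\ \ \forall s\in\{x,y\},k\in\{i,j\}\}.$$ Define three sets (with $(c,\ell)=(c_i,c_j,\ell_i,\ell_j)\in Q^{FLP}$ in each): (i) $E^8$: all $(c,\ell,z)$ with $z=(z^y_{i,j},z^x_{i,j},z^y_{j,i},z^x_{j,i})\in\{0,1\}^4$ not identically zero, $z^s_{i,j}+z^s_{j,i}\le 1$ for each $s$, $z^s_{p,q}=1\Rightarrow \mathscr{B}_p\leftarrow_s\mathscr{B}_q$, and $z^s_{i,j}=z^s_{j,i}=0\Rightarrow(\mathscr{B}_i\not\leftarrow_s\mathscr{B}_j$ and $\mathscr{B}_j\not\leftarrow_s\mathscr{B}_i)$; (ii) $E^U$: all $(c,\ell,u)$ with $u=(u^y_{i,j},u^x_{i,j},u^y_{j,i},u^x_{j,i})\in\{0,1\}^4$ a unit vector and $u^s_{p,q}=1\Rightarrow\mathscr{B}_p\leftarrow_s\mathscr{B}_q$; (iii) $E^{GB}$: all $(c,\ell,w)$ with $w\in\{0,1\}^2$ such that $w=(0,0)\Rightarrow\mathscr{B}_i\leftarrow_y\mathscr{B}_j$,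 $w=(1,0)\Rightarrow\mathscr{B}_i\leftarrow_x\mathscr{B}_j$, $w=(1,1)\Rightarrow\mathscr{B}_j\leftarrow_y\mathscr{B}_i$, $w=(0,1)\Rightarrow\mathscr{B}_j\leftarrow_x\mathscr{B}_i$. Suppose $a\in\mathbb{R}^4$ (coefficients of $c$), $b\in\mathbb{R}^4$ (coefficients of $\ell$), $\delta\in\mathbb{R}^4$ with $\delta\ge0$ and $f\in\mathbb{R}$ are such that $a^Tc+b^T\ell+\delta^Tz\le f$ holds for all $(c,\ell,z)\in E^8$. Then $a^Tc+b^T\ell+\delta^Tu\le f$ holds for all $(c,\ell,u)\in E^U$, and $a^Tc+b^T\ell+\delta^T\mathscr{A}^{GB}(w)\le f$ holds for all $(c,\ell,w)\in E^{GB}$, where $\mathscr{A}^{GB}(w)=(-w_1-w_2+1,\ w_1-w_2,\ w_1+w_2-1,\ -w_1+w_2)$ (taking the place of $(z^y_{i,j},z^x_{i,j},z^y_{j,i},z^x_{j,i})$).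
   Context: $\mathscr{B}_p\leftarrow_s\mathscr{B}_q$ means $c^s_p+\tfrac12\ell^s_p\le c^s_q-\tfrac12\ell^s_q$ and $\mathscr{B}_p\not\leftarrow_s\mathscr{B}_q$ means $c^s_p+\tfrac12\ell^s_p\ge c^s_q-\tfrac12\ell^s_q$. The sets $E^8,E^U,E^{GB}$ are the embeddings $\operatorname{Em}(Q^{FLP},D^8,C^8)$, $\operatorname{Em}(Q^{FLP},D^4,U^4)$, $\operatorname{Em}(Q^{FLP},D^4,GB^4)$ (refined eight-branch, unary four-branch, and Gray two-bit encodings of the non-overlap condition). In the paper $ub^s_k=\min\{\sqrt{\alpha_k\beta_k},L^s\}$ and $lb^s_k=\beta_k/ub^s_k$ for an aspect ratio $\beta_k>0$. *)

From Stdlib Require Import Reals.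
Open Scope R_scope.

Inductive dir := DX | DY.
Inductive bx := BI | BJ.

Definition other (p : bx) : bx := match p with BI => BJ | BJ => BI end.

Definition sum4 (F : bx -> dir -> R) : R :=
  F BI DX + F BI DY + F BJ DX + F BJ DY.

Definition dot4 (a v : bx -> dir -> R) : R := sum4 (fun k s => a k s * v k s).

(* Q^FLP : c k s = c^s_k (center), l k s = l^s_k (side length). *)
Definition inQ (L : dir -> R) (alpha : bx -> R) (lb ub : bx -> dir -> R)
  (c l : bx -> dir -> R) : Prop :=
  (forall k s, l k s / 2 <= c k s <= L s - l k s / 2) /\
  (forall k s, lb k s <= l k s <= ub k s) /\
  (forall k, l k DX * l k DY >= alpha k).

Definition prec (c l : bx -> dir -> R) (s : dir) (p q : bx) : Prop :=
  c p s + l p s / 2 <= c q s - l q s / 2.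
(* B_p not<-_s B_q  (as defined in the paper: the reverse weak inequality) *)
Definition nprec (c l : bx -> dir -> R) (s : dir) (p q : bx) : Prop :=
  c p s + l p s / 2 >= c q s - l q s / 2.

(* Binary variables indexed by (p, s): z p s = z^s_{p, other p}. *)
Definition binary4 (z : bx -> dir -> R) : Prop :=
  forall p s, z p s = 0 \/ z p s = 1.

Definition E8 L alpha lb ub (c l z : bx -> dir -> R) : Prop :=
  inQ L alpha lb ub c l /\
  binary4 z /\
  (exists p s, z p s <> 0) /\
  (forall s, z BI s + z BJ s <= 1) /\
  (forall p s, z p s = 1 -> prec c l s p (other p)) /\
  (forall s, z BI s = 0 /\ z BJ s = 0 -> nprec c l s BI BJ /\ nprec c l s BJ BI).

Definition bx_eqb (p q : bx) : bool :=
  match p, q with BI, BI | BJ, BJ => true | _, _ => false end.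
Definition dir_eqb (s t : dir) : bool :=
  match s, t with DX, DX | DY, DY => true | _, _ => false end.

Definition unitvec (p : bx) (s : dir) : bx -> dir -> R :=
  fun p' s' => if andb (bx_eqb p p') (dir_eqb s s') then 1 else 0.

Definition EU L alpha lb ub (c l u : bx -> dir -> R) : Prop :=
  inQ L alpha lb ub c l /\
  binary4 u /\
  (exists p s, u = unitvec p s) /\
  (forall p s, u p s = 1 -> prec c l s p (other p)).

Definition EGB L alpha lb ub (c l : bx -> dir -> R) (w1 w2 : R) : Prop :=
  inQ L alpha lb ub c l /\
  (w1 = 0 \/ w1 = 1) /\ (w2 = 0 \/ w2 = 1) /\
  (w1 = 0 /\ w2 = 0 -> prec c l DY BI BJ) /\
  (w1 = 1 /\ w2 = 0 -> prec c l DX BI BJ) /\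
  (w1 = 1 /\ w2 = 1 -> prec c l DY BJ BI) /\
  (w1 = 0 /\ w2 = 1 -> prec c l DX BJ BI).

Definition AGB (w1 w2 : R) : bx -> dir -> R :=
  fun p s => match p, s with
             | BI, DY => - w1 - w2 + 1
             | BI, DX => w1 - w2
             | BJ, DY => w1 + w2 - 1
             | BJ, DX => - w1 + w2
             end.

(* The eight-branch constraints decouple by direction: for each s the pair (z^s_{i,j}, z^s_{j,i})
   can always be chosen admissibly.  Hence any unit vector u of E^U is dominated componentwise by
   some z of E^8 with the same (c, l), obtained by keeping u's direction and completing the other
   one; since delta >= 0 the E^8 inequality transfers to u.  Each A^GB(w) is in turn dominated by
   the unit vector of the separation that w selects, which reduces E^GB to E^U. *)

From Stdlib Require Import Reals Lra.
Open Scope R_scope.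

Lemma dot4_le_compat_l (d u v : bx -> dir -> R) :
  (forall p s, 0 <= d p s) -> (forall p s, u p s <= v p s) -> dot4 d u <= dot4 d v.
Proof.
  intros Hd Huv. unfold dot4, sum4.
  pose proof (Rmult_le_compat_l _ _ _ (Hd BI DX) (Huv BI DX)).
  pose proof (Rmult_le_compat_l _ _ _ (Hd BI DY) (Huv BI DY)).
  pose proof (Rmult_le_compat_l _ _ _ (Hd BJ DX) (Huv BJ DX)).
  pose proof (Rmult_le_compat_l _ _ _ (Hd BJ DY) (Huv BJ DY)).
  lra.
Qed.

Definition E8_dir (c l : bx -> dir -> R) (t : dir) (zi zj : R) : Prop :=
  (zi = 0 \/ zi = 1) /\ (zj = 0 \/ zj = 1) /\ zi + zj <= 1 /\
  (zi = 1 -> prec c l t BI BJ) /\ (zj = 1 -> prec c l t BJ BI) /\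
  (zi = 0 /\ zj = 0 -> nprec c l t BI BJ /\ nprec c l t BJ BI).

Lemma E8_intro L alpha lb ub c l z :
  inQ L alpha lb ub c l -> (forall t, E8_dir c l t (z BI t) (z BJ t)) ->
  (exists p s, z p s <> 0) -> E8 L alpha lb ub c l z.
Proof.
  intros HQ Hdir Hnz.
  split; [exact HQ |]. split; [| split; [exact Hnz | split; [| split]]].
  - intros p s; destruct p; apply Hdir.
  - intros s; apply Hdir.
  - intros p s; destruct p; apply Hdir.
  - intros s; apply Hdir.
Qed.

Lemma E8_dir_exists c l t : exists zi zj, E8_dir c l t zi zj.
Proof.
  unfold E8_dir, prec, nprec.
  destruct (Rle_dec (c BI t + l BI t / 2) (c BJ t - l BJ t / 2)).
  - exists 1, 0. repeat split; intros; lra.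
  - destruct (Rle_dec (c BJ t + l BJ t / 2) (c BI t - l BI t / 2)).
    + exists 0, 1. repeat split; intros; lra.
    + exists 0, 0. repeat split; intros; lra.
Qed.

Lemma E8_dir_unitvec c l p t :
  prec c l t p (other p) -> E8_dir c l t (unitvec p t BI t) (unitvec p t BJ t).
Proof.
  intros Hp; unfold E8_dir, unitvec.
  destruct p, t; simpl in *; repeat split; intros; auto; lra.
Qed.

Lemma unitvec_le_E8 L alpha lb ub c l p s :
  inQ L alpha lb ub c l -> prec c l s p (other p) ->
  exists z, E8 L alpha lb ub c l z /\ forall q t, unitvec p s q t <= z q t.
Proof.
  intros HQ Hp.
  destruct (E8_dir_exists c l (match s with DX => DY | DY => DX end)) as (zi & zj & Hz).
  exists (fun q t => if dir_eqb s t then unitvec p s q t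
                     else match q with BI => zi | BJ => zj end).
  split.
  - apply E8_intro; [exact HQ | |].
    + intros t; destruct s, t; simpl; auto; apply E8_dir_unitvec; exact Hp.
    + exists p, s; unfold unitvec; destruct p, s; simpl; lra.
  - intros q t; destruct s, t; simpl; try lra;
      destruct Hz as ([-> | ->] & [-> | ->] & _);
      unfold unitvec; destruct p, q; simpl; lra.
Qed.

Lemma EGB_le_unitvec L alpha lb ub c l w1 w2 :
  EGB L alpha lb ub c l w1 w2 ->
  exists p s, prec c l s p (other p) /\ forall q t, AGB w1 w2 q t <= unitvec p s q t.
Proof.
  intros (_ & [-> | ->] & [-> | ->] & H00 & H10 & H11 & H01).
  - exists BI, DY; split; [apply H00; auto |].
    intros q t; destruct q, t; unfold unitvec; simpl; lra.
  - exists BJ, DX; split; [apply H01; auto |].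
    intros q t; destruct q, t; unfold unitvec; simpl; lra.
  - exists BI, DX; split; [apply H10; auto |].
    intros q t; destruct q, t; unfold unitvec; simpl; lra.
  - exists BJ, DY; split; [apply H11; auto |].
    intros q t; destruct q, t; unfold unitvec; simpl; lra.
Qed.

Theorem proposition6p1
  (L : dir -> R) (alpha : bx -> R) (lb ub : bx -> dir -> R)
  (HL : forall s, 0 < L s) (Halpha : forall k, 0 < alpha k)
  (a b delta : bx -> dir -> R) (f : R)
  (Hdelta : forall p s, 0 <= delta p s)
  (Hvalid : forall c l z, E8 L alpha lb ub c l z ->
              dot4 a c + dot4 b l + dot4 delta z <= f) :
  (forall c l u, EU L alpha lb ub c l u ->
     dot4 a c + dot4 b l + dot4 delta u <= f) /\
  (forall c l w1 w2, EGB L alpha lb ub c l w1 w2 ->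
     dot4 a c + dot4 b l + dot4 delta (AGB w1 w2) <= f).
Proof.
  assert (Hunit : forall c l p s, inQ L alpha lb ub c l -> prec c l s p (other p) ->
            dot4 a c + dot4 b l + dot4 delta (unitvec p s) <= f).
  { intros c l p s HQ Hp.
    destruct (unitvec_le_E8 L alpha lb ub c l p s HQ Hp) as (z & Hz & Hle).
    pose proof (Hvalid c l z Hz).
    pose proof (dot4_le_compat_l delta _ _ Hdelta Hle).
    lra. }
  split.
  - intros c l u (HQ & _ & (p & s & ->) & Hu).
    apply Hunit; [exact HQ |]. apply Hu.
    unfold unitvec; destruct p, s; reflexivity.
  - intros c l w1 w2 Hw.
    destruct (EGB_le_unitvec L alpha lb ub c l w1 w2 Hw) as (p & s & Hp & Hle).
    pose proof (Hunit c l p s (proj1 Hw) Hp).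
    pose proof (dot4_le_compat_l delta _ _ Hdelta Hle).
    lra.
Qed.
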